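(* Let $\mathsf{CMP}$ be the set of linear processes $P$ that are complete, let $\mathsf{LF}$ be the set of lock-free processes, and let $\mathsf{PSL} = \{P \in \mathsf{CMP} \mid \mathrm{psl}(P)\}$ be the set of potentially self-locking complete processes (all notions as defined in the context). Then $$\mathsf{PSL} = \mathsf{CMP} \setminus \mathsf{LF}.$$
   Context: Fix a countable set $\mathcal{N}$ of names $a,b,\dots$ and a disjoint set $\overline{\mathcal{N}}$ of co-names with a bijection $a\mapsto \bar a$, extended by $\bar{\bar a}=a$; actions $\alpha$ range over $\mathcal{N}\cup\overline{\mathcal{N}}$. Processes are given by $P,Q,R ::= \mathbf{0} \mid \alpha.P \mid P \,|\, Q$ (finite CCS with prefix and parallel composition only). Evaluation contexts: $E ::= [-] \mid P\,|\,E \mid E\,|\,P$; process contexts: $C ::= [-] \mid P\,|\,C \mid C\,|\,P \mid \alpha.C$; $C[Q]$ denotes filling the hole with $Q$. Structural congruence $\equiv$ is the smallest congruence with $P|\mathbf{0}\equiv P$, $P|Q\equiv Q|P$, $P|(Q|R)\equiv (P|Q)|R$. Reduction $\to$ is the smallest relation with $a.P \,|\, \bar a.Q \to P\,|\,Q$, closed under evaluation contexts ($P\to P'$ implies $E[P]\to E[P']$) and under $\equiv$ ($P\equiv P'\to Q'\equiv Q$ implies $P\to Q$); $\to^*$ is its reflexive–transitive closure. A process is linear if no name occurs more than once as an input $a$ and no more than once as an output $\bar a$ (so each name occurs at most twice). Predicates: $\mathrm{in}(a,P)$ iff $\exists P',P''.\ P\equiv P'\,|\,a.P''$; $\mathrm{out}(a,P)$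 iff $\exists P',P''.\ P\equiv P'\,|\,\bar a.P''$; $\mathrm{sync}(a,P)$ iff $\mathrm{in}(a,P)$ and $\mathrm{out}(a,P)$; $\mathrm{wait}(a,P)$ iff exactly one of $\mathrm{in}(a,P)$, $\mathrm{out}(a,P)$ holds. Lock-freedom: $\mathrm{lf}(P)$ iff for all $Q$ and $a$, if $P\to^* Q$ and $\mathrm{wait}(a,Q)$ then there exists $R$ with $Q\to^* R$ and $\mathrm{sync}(a,R)$; $\mathsf{LF}=\{P\mid \mathrm{lf}(P)\}$. Completeness: $\mathrm{cin}(a,P)$ iff there exist a process context $C$ and $Q$ with $P\equiv C[Q]$ and $\mathrm{in}(a,Q)$; $\mathrm{cout}(a,P)$ likewise with $\mathrm{out}(a,Q)$; $\mathrm{complete}(P)$ iff for all $a$, $\mathrm{cin}(a,P) \Leftrightarrow \mathrm{cout}(a,P)$; $\mathsf{CMP}$ is the set of linear processes $P$ with $\mathrm{complete}(P)$. Deadlock: $\mathrm{dl}(P)$ iff there is no $Q$ with $P\to Q$ and $P\not\equiv\mathbf{0}$. Top-completeness: $\mathrm{tcomplete}(P)$ iff for all $a$, ($\mathrm{in}(a,P)$ implies $\mathrm{cout}(a,P)$) and ($\mathrm{out}(a,P)$ implies $\mathrm{cin}(a,P)$). Self-deadlock: $\mathrm{sdl}(P)$ iff $\mathrm{dl}(P)$ and $\mathrm{tcomplete}(P)$. Potential self-locking: $\mathrm{psl}(P)$ iff there exist an evaluation context $E$ and a process $Q$ with $P\to^* E[Q]$ and $\mathrm{sdl}(Q)$.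 *)

From Stdlib Require Import Arith Relations.

Definition name := nat.

Inductive action : Type :=
| Inp : name -> action
| Out : name -> action.

Definition co (al : action) : action :=
  match al with Inp a => Out a | Out a => Inp a end.

Inductive proc : Type :=
| Nil : proc
| Pre : action -> proc -> proc
| Par : proc -> proc -> proc.

Inductive ectx : Type :=
| EHole : ectx
| EParL : proc -> ectx -> ectx
| EParR : ectx -> proc -> ectx.

Fixpoint efill (E : ectx) (Q : proc) : proc :=
  match E with
  | EHole => Q
  | EParL P E' => Par P (efill E' Q)
  | EParR E' P => Par (efill E' Q) P
  end.

Inductive pctx : Type :=
| CHole : pctx
| CParL : proc -> pctx -> pctx
| CParR : pctx -> proc -> pctx
| CPre : action -> pctx -> pctx.

Fixpoint cfill (C : pctx) (Q : proc) : proc :=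
  match C with
  | CHole => Q
  | CParL P C' => Par P (cfill C' Q)
  | CParR C' P => Par (cfill C' Q) P
  | CPre al C' => Pre al (cfill C' Q)
  end.

Inductive scong : proc -> proc -> Prop :=
| sc_nil : forall P, scong (Par P Nil) P
| sc_comm : forall P Q, scong (Par P Q) (Par Q P)
| sc_assoc : forall P Q R, scong (Par P (Par Q R)) (Par (Par P Q) R)
| sc_refl : forall P, scong P P
| sc_sym : forall P Q, scong P Q -> scong Q P
| sc_trans : forall P Q R, scong P Q -> scong Q R -> scong P R
| sc_pre : forall al P Q, scong P Q -> scong (Pre al P) (Pre al Q)
| sc_parL : forall P Q R, scong P Q -> scong (Par R P) (Par R Q)
| sc_parR : forall P Q R, scong P Q -> scong (Par P R) (Par Q R).

Inductive red : proc -> proc -> Prop :=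
| r_comm : forall a P Q, red (Par (Pre (Inp a) P) (Pre (Out a) Q)) (Par P Q)
| r_ctx : forall E P P', red P P' -> red (efill E P) (efill E P')
| r_struct : forall P P' Q' Q, scong P P' -> red P' Q' -> scong Q' Q -> red P Q.

Definition reds : proc -> proc -> Prop := clos_refl_trans proc red.

Definition action_eqb (x y : action) : bool :=
  match x, y with
  | Inp a, Inp b => Nat.eqb a b
  | Out a, Out b => Nat.eqb a b
  | _, _ => false
  end.

Fixpoint occ (al : action) (P : proc) : nat :=
  match P with
  | Nil => 0
  | Pre b P' => (if action_eqb al b then 1 else 0) + occ al P'
  | Par P1 P2 => occ al P1 + occ al P2
  end.

Definition linear (P : proc) : Prop :=
  forall a, occ (Inp a) P <= 1 /\ occ (Out a) P <= 1.

Definition in_ (a : name) (P : proc) : Prop :=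
  exists P' P'', scong P (Par P' (Pre (Inp a) P'')).
Definition out_ (a : name) (P : proc) : Prop :=
  exists P' P'', scong P (Par P' (Pre (Out a) P'')).
Definition sync (a : name) (P : proc) : Prop := in_ a P /\ out_ a P.
Definition wait (a : name) (P : proc) : Prop :=
  (in_ a P /\ ~ out_ a P) \/ (~ in_ a P /\ out_ a P).

Definition lf (P : proc) : Prop :=
  forall Q a, reds P Q -> wait a Q -> exists R, reds Q R /\ sync a R.

Definition cin (a : name) (P : proc) : Prop :=
  exists C Q, scong P (cfill C Q) /\ in_ a Q.
Definition cout (a : name) (P : proc) : Prop :=
  exists C Q, scong P (cfill C Q) /\ out_ a Q.
Definition complete (P : proc) : Prop := forall a, cin a P <-> cout a P.
Definition CMP (P : proc) : Prop := linear P /\ complete P.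

Definition dl (P : proc) : Prop := (~ exists Q, red P Q) /\ ~ scong P Nil.
Definition tcomplete (P : proc) : Prop :=
  forall a, (in_ a P -> cout a P) /\ (out_ a P -> cin a P).
Definition sdl (P : proc) : Prop := dl P /\ tcomplete P.
Definition psl (P : proc) : Prop :=
  exists E Q, reds P (efill E Q) /\ sdl Q.

Definition PSL (P : proc) : Prop := CMP P /\ psl P.

(* Every reduction consumes one input and one output of the same name, so a
   linear complete process stays balanced (a occurs as an input exactly when
   it occurs as an output).  If P is not lock-free, some reachable Q waits on
   a forever; running Q until it is stuck keeps that prefix on top, and the
   stuck state is a self-deadlock because balance makes it top-complete.
   Conversely, in a self-deadlocked Q every top-level prefix h has its dual
   somewhere in Q, but not on top, hence (by linearity) under another
   top-level prefix g.  A reduction of a context around Q can never fire a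
   top-level prefix of Q, since its partner stays buried; by induction both
   h and the guard g survive every reduction, so h waits forever. *)
From Stdlib Require Import Arith Lia Relations Classical.

Lemma action_eqb_spec x y : action_eqb x y = true <-> x = y.
Proof. destruct x, y; simpl; rewrite ?Nat.eqb_eq; split; intro H; congruence. Qed.

Lemma action_eqb_refl x : action_eqb x x = true.
Proof. apply action_eqb_spec; reflexivity. Qed.

Lemma action_eqb_neq x y : x <> y -> action_eqb x y = false.
Proof.
  intro Hxy. destruct (action_eqb x y) eqn:E; auto.
  apply action_eqb_spec in E. contradiction.
Qed.

Fixpoint top_occ (al : action) (P : proc) : nat :=
  match P with
  | Nil => 0
  | Pre b _ => if action_eqb al b then 1 else 0
  | Par P1 P2 => top_occ al P1 + top_occ al P2
  end.

(* Number of pairs of a [g]-prefix and an [al]-prefix somewhere beneath it. *)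
Fixpoint occ_below (g al : action) (P : proc) : nat :=
  match P with
  | Nil => 0
  | Pre b P' => (if action_eqb g b then occ al P' else 0) + occ_below g al P'
  | Par P1 P2 => occ_below g al P1 + occ_below g al P2
  end.

Fixpoint size (P : proc) : nat :=
  match P with
  | Nil => 0
  | Pre _ P' => S (size P')
  | Par P1 P2 => size P1 + size P2
  end.

Lemma scong_occ al P Q : scong P Q -> occ al P = occ al Q.
Proof. induction 1; simpl; lia. Qed.

Lemma scong_top_occ al P Q : scong P Q -> top_occ al P = top_occ al Q.
Proof. induction 1; simpl; lia. Qed.

Lemma scong_size P Q : scong P Q -> size P = size Q.
Proof. induction 1; simpl; lia. Qed.

Lemma scong_occ_below g al P Q : scong P Q -> occ_below g al P = occ_below g al Q.
Proof.
  induction 1; simpl; try lia.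
  match goal with H : scong ?P ?Q |- _ => rewrite (scong_occ al P Q H) end; lia.
Qed.

Definition redex (b : name) (X Y V : proc) : proc :=
  Par (Par (Pre (Inp b) X) (Pre (Out b) Y)) V.

Fixpoint ectx_frame (E : ectx) (V : proc) : proc :=
  match E with
  | EHole => V
  | EParL Q E' => Par (ectx_frame E' V) Q
  | EParR E' Q => Par (ectx_frame E' V) Q
  end.

Lemma scong_par_frame M A V Q : scong M (Par A V) ->
  scong (Par Q M) (Par A (Par V Q)) /\ scong (Par M Q) (Par A (Par V Q)).
Proof.
  intro H.
  assert (HR : scong (Par M Q) (Par A (Par V Q))).
  { eapply sc_trans; [apply sc_parR, H | apply sc_sym, sc_assoc]. }
  split; auto. eapply sc_trans; [apply sc_comm | exact HR].
Qed.

Lemma scong_efill E M A V :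
  scong M (Par A V) -> scong (efill E M) (Par A (ectx_frame E V)).
Proof. induction E; simpl; intro H; auto; apply scong_par_frame; auto. Qed.

Lemma red_inv P P' : red P P' ->
  exists b X Y V, scong P (redex b X Y V) /\ scong P' (Par (Par X Y) V).
Proof.
  induction 1 as [a P Q | E P P' _ IH | P P' Q' Q HP _ IH HQ].
  - exists a, P, Q, Nil. split; apply sc_sym, sc_nil.
  - destruct IH as (b & X & Y & V & H & H').
    exists b, X, Y, (ectx_frame E V). split; apply scong_efill; auto.
  - destruct IH as (b & X & Y & V & H & H').
    exists b, X, Y, V. split; eapply sc_trans; eauto using sc_sym.
Qed.

Lemma red_redex P b X Y V : scong P (redex b X Y V) -> red P (Par (Par X Y) V).
Proof.
  intro H. eapply r_struct; [exact H | | apply sc_refl].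
  exact (r_ctx (EParR EHole V) _ _ (r_comm b X Y)).
Qed.

Lemma red_occ P P' : red P P' -> exists b, forall al,
  occ al P = occ al P'
    + (if action_eqb al (Inp b) then 1 else 0) + (if action_eqb al (Out b) then 1 else 0).
Proof.
  intro Hr. destruct (red_inv _ _ Hr) as (b & X & Y & V & H & H').
  exists b. intro al. rewrite (scong_occ al _ _ H), (scong_occ al _ _ H'). simpl. lia.
Qed.

Lemma red_size P P' : red P P' -> size P' < size P.
Proof.
  intro Hr. destruct (red_inv _ _ Hr) as (b & X & Y & V & H & H').
  rewrite (scong_size _ _ H), (scong_size _ _ H'). simpl. lia.
Qed.

Lemma red_frame P P' : red P P' -> exists b,
  0 < top_occ (Inp b) P /\ 0 < top_occ (Out b) P /\
  forall g, g <> Inp b -> g <> Out b ->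
    top_occ g P <= top_occ g P' /\ forall al, occ_below g al P <= occ_below g al P'.
Proof.
  intro Hr. destruct (red_inv _ _ Hr) as (b & X & Y & V & H & H').
  exists b. rewrite !(scong_top_occ _ _ _ H). simpl. rewrite !Nat.eqb_refl.
  split; [lia | split; [lia |]]. intros g Hi Ho.
  rewrite (scong_top_occ _ _ _ H), (scong_top_occ _ _ _ H'). split.
  - simpl. rewrite (action_eqb_neq _ _ Hi), (action_eqb_neq _ _ Ho). lia.
  - intro al. rewrite (scong_occ_below _ _ _ _ H), (scong_occ_below _ _ _ _ H'). simpl.
    rewrite (action_eqb_neq _ _ Hi), (action_eqb_neq _ _ Ho). lia.
Qed.

Lemma red_top_occ h P P' : red P P' -> 0 < top_occ h P ->
  0 < top_occ h P' \/ 0 < top_occ (co h) P.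
Proof.
  intros Hr Hh. destruct (red_frame _ _ Hr) as (b & Hi & Ho & Hg).
  destruct (classic (h = Inp b)) as [->|Hni]; [right; exact Ho|].
  destruct (classic (h = Out b)) as [->|Hno]; [right; exact Hi|].
  left. pose proof (proj1 (Hg h Hni Hno)). lia.
Qed.

Lemma top_occ_spec al P :
  (exists P1 P2, scong P (Par P1 (Pre al P2))) <-> 0 < top_occ al P.
Proof.
  split.
  - intros (P1 & P2 & H). rewrite (scong_top_occ _ _ _ H). simpl.
    rewrite action_eqb_refl. lia.
  - induction P as [|b P _|P1 IH1 P2 IH2]; simpl.
    + lia.
    + destruct (action_eqb al b) eqn:E; [|lia]. intros _.
      apply action_eqb_spec in E; subst. exists Nil, P.
      eapply sc_trans; [apply sc_sym, sc_nil | apply sc_comm].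
    + intro H. destruct (Nat.lt_ge_cases 0 (top_occ al P1)) as [H1|H1].
      * destruct (IH1 H1) as (A & B & HA). exists (Par A P2), B.
        eapply sc_trans. apply sc_parR, HA.
        eapply sc_trans. apply sc_sym, sc_assoc.
        eapply sc_trans. apply sc_parL, sc_comm. apply sc_assoc.
      * destruct (IH2 ltac:(lia)) as (A & B & HA). exists (Par P1 A), B.
        eapply sc_trans. apply sc_parL, HA. apply sc_assoc.
Qed.

Lemma in_top_occ a P : in_ a P <-> 0 < top_occ (Inp a) P.
Proof. exact (top_occ_spec (Inp a) P). Qed.

Lemma out_top_occ a P : out_ a P <-> 0 < top_occ (Out a) P.
Proof. exact (top_occ_spec (Out a) P). Qed.

Lemma top_occ_le_occ al P : top_occ al P <= occ al P.
Proof. induction P; simpl; try destruct (action_eqb al a); lia. Qed.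

Lemma occ_le_cfill al C Q : occ al Q <= occ al (cfill C Q).
Proof. induction C; simpl; lia. Qed.

Lemma occ_cfill_pre al P : 0 < occ al P -> exists C R, P = cfill C (Pre al R).
Proof.
  induction P as [|b P IH|P1 IH1 P2 IH2]; simpl.
  - lia.
  - destruct (action_eqb al b) eqn:E.
    + intros _. apply action_eqb_spec in E; subst. exists CHole, P; reflexivity.
    + intro H. destruct (IH H) as (C & R & ->). exists (CPre b C), R; reflexivity.
  - intro H. destruct (Nat.lt_ge_cases 0 (occ al P1)) as [H1|H1].
    + destruct (IH1 H1) as (C & R & ->). exists (CParR C P2), R; reflexivity.
    + destruct (IH2 ltac:(lia)) as (C & R & ->). exists (CParL P1 C), R; reflexivity.
Qed.

Lemma occ_spec al P :
  (exists C Q, scong P (cfill C Q) /\ exists P1 P2, scong Q (Par P1 (Pre al P2)))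
  <-> 0 < occ al P.
Proof.
  split.
  - intros (C & Q & H & HQ). apply top_occ_spec in HQ. rewrite (scong_occ _ _ _ H).
    pose proof (top_occ_le_occ al Q). pose proof (occ_le_cfill al C Q). lia.
  - intro H. destruct (occ_cfill_pre _ _ H) as (C & R & ->).
    exists C, (Pre al R). split; [apply sc_refl|]. apply top_occ_spec. simpl.
    rewrite action_eqb_refl. lia.
Qed.

Lemma cin_occ a P : cin a P <-> 0 < occ (Inp a) P.
Proof. exact (occ_spec (Inp a) P). Qed.

Lemma cout_occ a P : cout a P <-> 0 < occ (Out a) P.
Proof. exact (occ_spec (Out a) P). Qed.

Lemma top_occ_dual_red h Q :
  0 < top_occ h Q -> 0 < top_occ (co h) Q -> exists Q', red Q Q'.
Proof.
  assert (Hio : forall a Q, 0 < top_occ (Inp a) Q -> 0 < top_occ (Out a) Q ->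
                  exists Q', red Q Q').
  { clear. intros a Q Hi Ho. apply top_occ_spec in Hi as (Q1 & X & H1).
    rewrite (scong_top_occ _ _ _ H1) in Ho. simpl in Ho.
    destruct (proj2 (top_occ_spec (Out a) Q1) ltac:(lia)) as (Q2 & Y & H2).
    exists (Par (Par X Y) Q2). apply (red_redex _ a).
    eapply sc_trans. exact H1.
    eapply sc_trans. apply sc_parR, H2.
    eapply sc_trans. apply sc_comm.
    eapply sc_trans. apply sc_parL, sc_comm. apply sc_assoc. }
  destruct h; simpl; eauto.
Qed.

Lemma scong_nil_or_top P : scong P Nil \/ exists al, 0 < top_occ al P.
Proof.
  induction P as [|b P _|P1 IH1 P2 IH2].
  - left; apply sc_refl.
  - right. exists b. simpl. rewrite action_eqb_refl. lia.
  - destruct IH1 as [H1|(al & H1)]; [destruct IH2 as [H2|(al & H2)]|].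
    + left. eapply sc_trans. apply sc_parR, H1.
      eapply sc_trans. apply sc_parL, H2. apply sc_nil.
    + right. exists al. simpl. lia.
    + right. exists al. simpl. lia.
Qed.

Lemma linear_occ P : linear P <-> forall al, occ al P <= 1.
Proof. split; intro H; [intros [a|a]; apply H | intro a; split; apply H]. Qed.

Lemma reds_linear P P' : reds P P' -> linear P -> linear P'.
Proof.
  induction 1 as [P P' Hr| |]; auto.
  rewrite !linear_occ. intros HL al.
  destruct (red_occ _ _ Hr) as (b & Hb). specialize (HL al). rewrite Hb in HL. lia.
Qed.

Definition balanced (P : proc) : Prop := forall a, occ (Inp a) P = occ (Out a) P.

Lemma reds_balanced P P' : reds P P' -> balanced P -> balanced P'.
Proof.
  induction 1 as [P P' Hr| |]; auto.
  intros HB a. destruct (red_occ _ _ Hr) as (b & Hb).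
  specialize (HB a). rewrite !Hb in HB. simpl in HB. destruct (a =? b); lia.
Qed.

Lemma CMP_balanced P : CMP P -> balanced P.
Proof.
  intros [Hl Hc] a. destruct (Hl a) as [Hi Ho]. destruct (Hc a) as [Hio Hoi].
  rewrite cin_occ, cout_occ in Hio, Hoi.
  destruct (Nat.lt_ge_cases 0 (occ (Inp a) P)) as [E|E]; [specialize (Hio E); lia|].
  destruct (Nat.lt_ge_cases 0 (occ (Out a) P)) as [E'|E']; [specialize (Hoi E'); lia|].
  lia.
Qed.

Lemma balanced_tcomplete P : balanced P -> tcomplete P.
Proof.
  intros HB b. rewrite in_top_occ, out_top_occ, cin_occ, cout_occ, (HB b).
  pose proof (top_occ_le_occ (Inp b) P). pose proof (top_occ_le_occ (Out b) P).
  rewrite (HB b) in *. split; lia.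
Qed.

Lemma reds_stuck_top h Q : 0 < top_occ h Q ->
  (forall R, reds Q R -> ~ (0 < top_occ h R /\ 0 < top_occ (co h) R)) ->
  exists S, reds Q S /\ 0 < top_occ h S /\ ~ exists T, red S T.
Proof.
  remember (size Q) as n eqn:Hn. revert Q Hn.
  induction n as [n IH] using (well_founded_induction lt_wf).
  intros Q -> Hh Hnever.
  destruct (classic (exists T, red Q T)) as [[T HT]|Hstuck].
  2: { exists Q; repeat split; auto. apply rt_refl. }
  destruct (red_top_occ h _ _ HT Hh) as [HhT|Hco].
  - destruct (IH (size T) (red_size _ _ HT) T eq_refl HhT) as (S & HTS & HS & Hstuck).
    + intros R HR. apply Hnever. eapply rt_trans; [apply rt_step, HT | exact HR].
    + exists S. split; auto. eapply rt_trans; [apply rt_step, HT | exact HTS].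
  - exfalso. exact (Hnever Q (rt_refl _ _ _) (conj Hh Hco)).
Qed.

Lemma not_lf_psl P : CMP P -> ~ lf P -> psl P.
Proof.
  intros HC Hnlf.
  apply not_all_ex_not in Hnlf as [Q HQ]. apply not_all_ex_not in HQ as [a Ha].
  apply imply_to_and in Ha as [HPQ Ha]. apply imply_to_and in Ha as [Hwait Hnsync].
  assert (Hnever : forall R, reds Q R -> ~ sync a R) by eauto.
  assert (Hh : exists h, 0 < top_occ h Q /\
            forall R, reds Q R -> ~ (0 < top_occ h R /\ 0 < top_occ (co h) R)).
  { destruct Hwait as [[Hi _]|[_ Ho]].
    - exists (Inp a). split; [apply in_top_occ, Hi |].
      intros R HR [H1 H2]. apply (Hnever R HR).
      split; [apply in_top_occ, H1 | apply out_top_occ, H2].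
    - exists (Out a). split; [apply out_top_occ, Ho |].
      intros R HR [H1 H2]. apply (Hnever R HR).
      split; [apply in_top_occ, H2 | apply out_top_occ, H1]. }
  destruct Hh as (h & Hh & Hh_never).
  destruct (reds_stuck_top h Q Hh Hh_never) as (S & HQS & HS & Hstuck).
  assert (HPS : reds P S) by (eapply rt_trans; eauto).
  exists EHole, S. repeat split; auto.
  - intro Hnil. rewrite (scong_top_occ h _ _ Hnil) in HS. simpl in HS. lia.
  - apply balanced_tcomplete, (reds_balanced P); auto using CMP_balanced.
  - apply balanced_tcomplete, (reds_balanced P); auto using CMP_balanced.
Qed.

Lemma occ_below_absent g al P : occ g P = 0 -> occ_below g al P = 0.
Proof.
  induction P as [|b P IH|P1 IH1 P2 IH2]; simpl; auto.
  - destruct (action_eqb g b); intro H; [lia|]. rewrite IH; lia.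
  - intro H. rewrite IH1, IH2; lia.
Qed.

(* With a single [g]-prefix, an [al]-prefix beneath it is not on top. *)
Lemma top_occ_add_occ_below g al P :
  occ g P <= 1 -> top_occ al P + occ_below g al P <= occ al P.
Proof.
  induction P as [|b P IH|P1 IH1 P2 IH2]; simpl; auto.
  - destruct (action_eqb g b); intro H.
    + rewrite (occ_below_absent g al P ltac:(lia)). destruct (action_eqb al b); lia.
    + specialize (IH H). destruct (action_eqb al b); lia.
  - intro H. specialize (IH1 ltac:(lia)). specialize (IH2 ltac:(lia)). lia.
Qed.

Lemma occ_top_or_below al P : 0 < occ al P ->
  0 < top_occ al P \/ exists g, 0 < top_occ g P /\ 0 < occ_below g al P.
Proof.
  induction P as [|b P _|P1 IH1 P2 IH2]; simpl.
  - lia.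
  - destruct (action_eqb al b); intro H; [left; lia|].
    right. exists b. rewrite action_eqb_refl. lia.
  - intro H. destruct (Nat.lt_ge_cases 0 (occ al P1)) as [H1|H1].
    + destruct (IH1 H1) as [H2|(g & H2 & H3)]; [left | right; exists g]; lia.
    + destruct (IH2 ltac:(lia)) as [H2|(g & H2 & H3)]; [left | right; exists g]; lia.
Qed.

Section SelfDeadlock.

Variable Q : proc.
Hypothesis Q_dl : dl Q.
Hypothesis Q_tcomplete : tcomplete Q.

Definition keeps_top (R : proc) : Prop :=
  forall g, 0 < top_occ g Q ->
    0 < top_occ g R /\ forall al, occ_below g al Q <= occ_below g al R.

Lemma top_occ_dual_occ h : 0 < top_occ h Q -> 0 < occ (co h) Q.
Proof.
  destruct h as [a|a]; simpl; intro H.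
  - apply cout_occ, (Q_tcomplete a), in_top_occ, H.
  - apply cin_occ, (Q_tcomplete a), out_top_occ, H.
Qed.

Lemma keeps_top_dual R : keeps_top R -> linear R ->
  forall h, 0 < top_occ h Q -> top_occ (co h) R = 0.
Proof.
  intros HK HL h Hh. rewrite linear_occ in HL.
  destruct (occ_top_or_below _ _ (top_occ_dual_occ h Hh)) as [Htop|(g & Hg & Hbelow)].
  - exfalso. exact (proj1 Q_dl (top_occ_dual_red h Q Hh Htop)).
  - destruct (HK g Hg) as [_ HKg]. specialize (HKg (co h)).
    pose proof (top_occ_add_occ_below g (co h) R (HL g)). specialize (HL (co h)). lia.
Qed.

Lemma keeps_top_red R R' : keeps_top R -> linear R -> red R R' -> keeps_top R'.
Proof.
  intros HK HL Hr. destruct (red_frame _ _ Hr) as (b & Hi & Ho & Hframe).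
  assert (Hdual : forall g, 0 < top_occ g Q -> 0 < top_occ (co g) R -> False).
  { intros g Hg Hco. pose proof (keeps_top_dual R HK HL g Hg). lia. }
  intros g Hg.
  assert (Hni : g <> Inp b) by (intros ->; exact (Hdual _ Hg Ho)).
  assert (Hno : g <> Out b) by (intros ->; exact (Hdual _ Hg Hi)).
  destruct (HK g Hg) as [Htop Hbelow]. destruct (Hframe g Hni Hno) as [Htop' Hbelow'].
  split; [lia|]. intro al. specialize (Hbelow al). specialize (Hbelow' al). lia.
Qed.

Lemma keeps_top_reds R R' : reds R R' -> keeps_top R -> linear R -> keeps_top R'.
Proof.
  intros Hrs. induction Hrs as [R R' Hr| |R1 R2 R3 Hrs1 IH1 Hrs2 IH2]; intros HK HL.
  - exact (keeps_top_red R R' HK HL Hr).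
  - exact HK.
  - apply IH2; [apply IH1 | eapply reds_linear]; eauto.
Qed.

End SelfDeadlock.

Lemma psl_not_lf P : linear P -> psl P -> ~ lf P.
Proof.
  intros Hlin (E & Q & HPW & Hdl & Htc) Hlf.
  destruct (scong_nil_or_top Q) as [Hnil|(h & Hh)]; [exact (proj2 Hdl Hnil)|].
  set (W := efill E Q) in *.
  assert (HKW : keeps_top Q W).
  { intros g Hg. unfold W. clear - Hg. split.
    - induction E; simpl; lia.
    - intro al. induction E; simpl; lia. }
  assert (Hstuck : forall R, reds W R -> 0 < top_occ h R /\ top_occ (co h) R = 0).
  { intros R HR. assert (HLW : linear W) by (eapply reds_linear; eauto).
    pose proof (keeps_top_reds Q Hdl Htc W R HR HKW HLW) as HKR.
    split; [apply (HKR h Hh) |].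
    apply (keeps_top_dual Q Hdl Htc R HKR); [eapply reds_linear|]; eauto. }
  destruct (Hstuck W (rt_refl _ _ _)) as [HhW HcoW].
  destruct h as [a|a]; simpl in HcoW.
  - assert (Hw : wait a W) by (left; rewrite in_top_occ, out_top_occ; lia).
    destruct (Hlf W a HPW Hw) as (R & HR & _ & Ho).
    apply out_top_occ in Ho. pose proof (proj2 (Hstuck R HR)). simpl in *. lia.
  - assert (Hw : wait a W) by (right; rewrite in_top_occ, out_top_occ; lia).
    destruct (Hlf W a HPW Hw) as (R & HR & Hi & _).
    apply in_top_occ in Hi. pose proof (proj2 (Hstuck R HR)). simpl in *. lia.
Qed.

Theorem theorem1 : forall P : proc, PSL P <-> (CMP P /\ ~ lf P).
Proof.
  intro P. split.
  - intros [HC Hpsl]. split; [exact HC | exact (psl_not_lf P (proj1 HC) Hpsl)].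
  - intros [HC Hnlf]. split; [exact HC | exact (not_lf_psl P HC Hnlf)].
Qed.
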